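(* Let $Q\in S^2_0(\mathbb R^4)$ and $a,b\in\mathbb R$, and define \[R=-(Q^3)_0+\tfrac{a-b}{2}(Q^2)_0+\big(ab+\tfrac12\operatorname{tr}(Q^2)\big)Q,\qquad 4r=\det Q+\tfrac{a-b}{6}\operatorname{tr}(Q^3)+\tfrac{ab}{2}\operatorname{tr}(Q^2)+(ab)^2.\] If $R=0$, then $r\geqslant0$.
   Context: $S^2_0(\mathbb R^4)$ is the space of real symmetric trace-free $4\times4$ matrices; $X_0=X-\frac14(\operatorname{tr}X)I$ denotes the trace-free part. *)

From HB Require Import structures.
From mathcomp Require Import all_boot all_order all_algebra.
Set Implicit Arguments. Unset Strict Implicit. Unset Printing Implicit Defensive.
Import Order.TTheory GRing.Theory Num.Theory.
Local Open Scope ring_scope.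

Definition tf (F : fieldType) (X : 'M[F]_4) : 'M[F]_4 :=
  X - ((\tr X) / 4%:R)%:M.

Definition sym_tracefree (F : fieldType) (Q : 'M[F]_4) : Prop :=
  Q^T = Q /\ \tr Q = 0.

Definition Rmat (F : fieldType) (Q : 'M[F]_4) (a b : F) : 'M[F]_4 :=
  - tf (Q ^+ 3) + ((a - b) / 2%:R) *: tf (Q ^+ 2)
  + (a * b + (\tr (Q ^+ 2)) / 2%:R) *: Q.

Definition rval (F : fieldType) (Q : 'M[F]_4) (a b : F) : F :=
  (\det Q + (a - b) / 6%:R * \tr (Q ^+ 3) + (a * b) / 2%:R * \tr (Q ^+ 2)
   + (a * b) ^+ 2) / 4%:R.

From HB Require Import structures.
From mathcomp Require Import all_boot all_order all_algebra.
From mathcomp Require Import ring complex sesquilinear spectral.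
Set Implicit Arguments. Unset Strict Implicit. Unset Printing Implicit Defensive.
Import Order.TTheory GRing.Theory Num.Theory.
Local Open Scope ring_scope.

(* Embed Q into the complex matrices; being real symmetric it is
   hermitian, hence unitarily similar to a diagonal matrix diag(l_0,..,l_3)
   with real entries summing to 0.  R and 4r are built from powers, traces
   and the determinant, so they are compatible with ring morphisms and with
   similarity; R = 0 therefore says that every l_i is a root of one monic
   cubic x^3 - c x^2 - sigma x - k, where c = (a-b)/2 and
   sigma = ab + tr(Q^2)/2, while 4r becomes a symmetric polynomial in the l_i.
   A cubic has at most three distinct roots, so some eigenvalue is repeated
   and the spectrum is a permutation of [x; x; y; z] with 2x + y + z = 0.
   Comparing the roots pairwise (two distinct roots satisfy a quadratic
   relation, three distinct roots add up to c) leaves three configurations,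
   in each of which 4r is the square of a real number: (ab)^2, 0, or
   (2x(x+c))^2.  The file proves these facts in this order: a list lemma,
   roots of a cubic, the eigenvalue inequality, similarity and ring-morphism
   invariance of R and r, the diagonal case, and finally the theorem. *)

Lemma not_uniq_perm (T : eqType) (s : seq T) :
  ~~ uniq s -> exists x t, perm_eq s [:: x, x & t].
Proof.
elim: s => [//|y s IHs] /=; rewrite negb_and negbK.
case: (boolP (y \in s)) => [ys _ | _ /= /IHs [x [t st]]].
  by exists y, (rem y s); rewrite perm_cons perm_to_rem.
exists x, (y :: t); rewrite -(perm_cons y) in st.
apply: (perm_trans st); rewrite -[[:: y, x, x & t]]/([:: y] ++ [:: x; x] ++ t).
by rewrite perm_catCA.
Qed.

Definition psum (R : pzSemiRingType) (n : nat) (ls : seq R) : R :=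
  \sum_(x <- ls) x ^+ n.

Lemma psum_perm (R : pzSemiRingType) n (ls ls' : seq R) :
  perm_eq ls ls' -> psum n ls = psum n ls'.
Proof. exact: perm_big. Qed.

Section CubicRoots.
Variables (K : fieldType) (c sg k : K).

(* The monic cubic satisfied by every eigenvalue of Q when R = 0. *)
Definition cubic (x : K) : K := x ^+ 3 - c * x ^+ 2 - sg * x - k.

Lemma cubic_roots_size (rs : seq K) :
  uniq rs -> {in rs, forall x, cubic x = 0} -> (size rs <= 3)%N.
Proof.
pose p : {poly K} := Poly [:: - k; - sg; - c; 1].
have size_p : size p = 4 by rewrite /p (@PolyK _ 0) //= oner_eq0.
move=> urs rs0; suff: (size rs < size p)%N by rewrite size_p.
apply: max_poly_roots => //.
- by rewrite -size_poly_eq0 size_p.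
- apply/allP => x /rs0 x0; rewrite /root /p horner_Poly /=; apply/eqP.
  by rewrite -[RHS]x0 /cubic; ring.
Qed.

(* (cubic x - cubic y) / (x - y): it vanishes on two distinct roots. *)
Definition pair_rel (x y : K) : K := x ^+ 2 + x * y + y ^+ 2 - c * (x + y) - sg.

Lemma cubic_pair x y : cubic x = 0 -> cubic y = 0 -> x != y -> pair_rel x y = 0.
Proof.
move=> x0 y0 xy; have : (x - y) * pair_rel x y = cubic x - cubic y.
  by rewrite /pair_rel /cubic; ring.
by rewrite x0 y0 subrr => /eqP; rewrite mulf_eq0 subr_eq0 (negbTE xy) => /eqP.
Qed.

(* Three distinct roots are all the roots, so they add up to c. *)
Lemma cubic_three_sum x y z : cubic x = 0 -> cubic y = 0 -> cubic z = 0 ->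
  x != y -> x != z -> y != z -> x + y + z = c.
Proof.
move=> x0 y0 z0 xy xz yz.
have : (y - z) * (x + y + z - c) = pair_rel x y - pair_rel x z.
  by rewrite /pair_rel; ring.
rewrite !cubic_pair // subrr => /eqP; rewrite mulf_eq0 subr_eq0 (negbTE yz) /=.
by rewrite subr_eq0 => /eqP.
Qed.

End CubicRoots.

Section EigenvalueInequality.
(* c stands for (a - b)/2 and s for ab. *)
Variables (K : numFieldType) (c s : K).

(* The coefficient sigma = ab + tr(Q^2)/2 of the cubic, for spectrum ls. *)
Definition sigma (ls : seq K) : K := s + psum 2 ls / 2%:R.

(* 4r in terms of the spectrum ls of Q. *)
Definition four_r (ls : seq K) : K :=
  \prod_(x <- ls) x + c / 3%:R * psum 3 ls + s / 2%:R * psum 2 ls + s ^+ 2.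

Lemma four_r_perm (ls ls' : seq K) : perm_eq ls ls' -> four_r ls = four_r ls'.
Proof. by move=> pls; rewrite /four_r !(psum_perm _ pls) (perm_big _ pls). Qed.

Let rel ls := pair_rel c (sigma ls).

(* In the three configurations left by the root analysis, 4r is determined
   modulo the pair relation of two distinct eigenvalues. *)
Lemma four_r_22 x :
  four_r [:: x; x; - x; - x] = rel [:: x; x; - x; - x] x (- x) ^+ 2.
Proof. by rewrite /rel /pair_rel /four_r /sigma /psum !big_cons !big_nil; field. Qed.

Lemma four_r_31 x (p := rel [:: x; x; x; - 3%:R * x] x (- 3%:R * x)) :
  four_r [:: x; x; x; - 3%:R * x] =
  (2%:R * x * (x + c)) ^+ 2 + p * (p - 2%:R * (x ^+ 2 + 2%:R * c * x) - 6%:R * x ^+ 2).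
Proof.
by rewrite /p /rel /pair_rel /four_r /sigma /psum !big_cons !big_nil; field.
Qed.

Lemma four_r_211 y (z := 2%:R * c - y) (p := rel [:: - c; - c; y; z] y z) :
  four_r [:: - c; - c; y; z] = p * (p + y * z - c ^+ 2).
Proof.
by rewrite /p /z /rel /pair_rel /four_r /sigma /psum !big_cons !big_nil; field.
Qed.

Lemma four_r_repeated x y z k (ls := [:: x; x; y; z]) :
  x + x + y + z = 0 -> {in ls, forall t, cubic c (sigma ls) k t = 0} ->
  [\/ four_r ls = s ^+ 2, four_r ls = 0 | four_r ls = (2%:R * x * (x + c)) ^+ 2].
Proof.
rewrite {}/ls; wlog xz : y z / x != z => [hwlog|sum0 roots].
  have [exz sum0 roots|] := eqVneq x z; last exact: hwlog.
  subst z; have [exy|xy] := eqVneq x y; first subst y.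
    have -> : x = 0.
      by transitivity ((x + x + x + x) / 4%:R); [field | rewrite sum0 mul0r].
    by apply: Or31; rewrite /four_r /psum !big_cons !big_nil; ring.
  have pxy : perm_eq [:: x; x; y; x] [:: x; x; x; y].
    by rewrite !perm_cons (perm_catC [:: y]).
  rewrite (four_r_perm pxy); apply: hwlog => // [|t]; first by rewrite -sum0; ring.
  by rewrite -(perm_mem pxy) /sigma -(psum_perm _ pxy) => /roots.
have [rx ry rz] : [/\ cubic c (sigma [:: x; x; y; z]) k x = 0,
  cubic c (sigma [:: x; x; y; z]) k y = 0 & cubic c (sigma [:: x; x; y; z]) k z = 0].
  by split; apply: roots; rewrite !inE eqxx ?orbT.
have [eyz|yz] := eqVneq y z.
  subst z; have ey : y = - x.
    by transitivity ((x + x + y + y) / 2%:R - x); [field | rewrite sum0 mul0r sub0r].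
  subst y; apply: Or32; rewrite four_r_22 /rel (cubic_pair rx rz xz).
  by rewrite expr0n.
have [exy|xy] := eqVneq x y.
  subst y; have ez : z = - 3%:R * x.
    by transitivity ((x + x + x + z) - 3%:R * x); [ring | rewrite sum0 sub0r mulNr].
  subst z; apply: Or33; rewrite four_r_31 /rel (cubic_pair rx rz xz).
  by rewrite mul0r addr0.
have sum_c := cubic_three_sum rx ry rz xy xz yz.
have ex : x = - c.
  by transitivity ((x + x + y + z) - (x + y + z)); [ring | rewrite sum0 sum_c sub0r].
have ez : z = 2%:R * c - y.
  by transitivity ((x + y + z) - x - y); [ring | rewrite sum_c ex; ring].
subst x z; apply: Or32; rewrite four_r_211 /rel (cubic_pair ry rz yz).
by rewrite mul0r.
Qed.

Lemma four_r_ge0 (ls : seq K) k :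
  size ls = 4 -> psum 1 ls = 0 -> {in ls, forall t, cubic c (sigma ls) k t = 0} ->
  c \is Num.real -> s \is Num.real -> {in ls, forall t, t \is Num.real} ->
  0 <= four_r ls.
Proof.
move=> size_ls sum0 roots cR sR lsR.
have /not_uniq_perm [x [t lsE]] : ~~ uniq ls.
  by apply/negP => /cubic_roots_size /(_ roots); rewrite size_ls.
have [y [z tE]] : exists y z, t = [:: y; z].
  move/perm_size: lsE; rewrite size_ls.
  by case: t => [|y [|z [|]]] // _; exists y, z.
subst t; have xR : x \is Num.real by apply: lsR; rewrite (perm_mem lsE) inE eqxx.
rewrite (four_r_perm lsE).
have sum0' : x + x + y + z = 0.
  by rewrite -sum0 (psum_perm _ lsE) /psum !big_cons big_nil; ring.
have roots' : {in [:: x; x; y; z], forall t, cubic c (sigma [:: x; x; y; z]) k t = 0}.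
  by move=> t; rewrite -(perm_mem lsE) /sigma -(psum_perm _ lsE) => /roots.
case: (four_r_repeated sum0' roots') => ->; rewrite ?lexx // -realEsqr //.
by rewrite rpredM ?rpredD // rpredM // realn.
Qed.

End EigenvalueInequality.

Section Similarity.
Variables (K : fieldType) (n : nat) (P : 'M[K]_n).
Hypothesis P_unit : P \in unitmx.

Definition sim (X : 'M[K]_n) : 'M[K]_n := invmx P *m X *m P.

Lemma simX X m : sim (X ^+ m) = sim X ^+ m.
Proof.
elim: m => [|m IHm]; first by rewrite !expr0 /sim mulmx1 mulVmx.
by rewrite !exprS -!mulmxE -IHm /sim !mulmxA (mulmxK P_unit).
Qed.

Lemma simD X Y : sim (X + Y) = sim X + sim Y.
Proof. by rewrite /sim mulmxDr mulmxDl. Qed.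

Lemma simN X : sim (- X) = - sim X.
Proof. by rewrite /sim mulmxN mulNmx. Qed.

Lemma simZ k X : sim (k *: X) = k *: sim X.
Proof. by rewrite /sim -!mulmxA -scalemxAl -scalemxAr. Qed.

Lemma sim_tr X : \tr (sim X) = \tr X.
Proof. by rewrite /sim mxtrace_mulC mulmxA mulmxV // mul1mx. Qed.

Lemma sim_det X : \det (sim X) = \det X.
Proof. by rewrite /sim !det_mulmx mulrAC -det_mulmx mulVmx // det1 mul1r. Qed.

Lemma sim_inj : injective sim.
Proof.
move=> X Y /(congr1 (fun Z => P *m Z *m invmx P)).
by rewrite /sim !mulmxA !(mulmxV P_unit) !mul1mx !(mulmxK P_unit).
Qed.

End Similarity.

Section SimilarityInvariance.
Variables (K : fieldType) (P : 'M[K]_4).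
Hypothesis P_unit : P \in unitmx.

Lemma sim_tf X : tf (sim P X) = sim P (tf X).
Proof.
rewrite /tf (sim_tr P_unit) simD simN; congr (_ - _).
by rewrite /sim mul_mx_scalar -scalemxAl mulVmx // scalemx1.
Qed.

Lemma Rmat_sim X a b : Rmat (sim P X) a b = sim P (Rmat X a b).
Proof.
by rewrite /Rmat -!(simX P_unit) !sim_tf !(sim_tr P_unit) !(simD, simN, simZ).
Qed.

Lemma rval_sim X a b : rval (sim P X) a b = rval X a b.
Proof. by rewrite /rval -!(simX P_unit) !(sim_tr P_unit) (sim_det P_unit). Qed.

End SimilarityInvariance.

(* R and r commute with a change of field, used for the embedding of F into
   its complexification F[i]. *)
Section FieldMorphism.
Variables (F L : fieldType) (f : {rmorphism F -> L}).

Lemma map_mxX n (Q : 'M[F]_n.+1) m : map_mx f (Q ^+ m) = map_mx f Q ^+ m.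
Proof. exact: rmorphXn. Qed.

Lemma Rmat_map Q a b : Rmat (map_mx f Q) (f a) (f b) = map_mx f (Rmat Q a b).
Proof.
rewrite /Rmat /tf -!map_mxX !trace_map_mx; apply/matrixP => i j; rewrite !mxE.
by rewrite !(rmorph_nat, fmorphV, rmorphD, rmorphN, rmorphB, rmorphM, rmorphMn).
Qed.

Lemma rval_map Q a b : rval (map_mx f Q) (f a) (f b) = f (rval Q a b).
Proof.
rewrite /rval -!map_mxX !trace_map_mx det_map_mx.
by rewrite !(rmorph_nat, fmorphV, rmorphXn, rmorphD, rmorphB, rmorphN, rmorphM).
Qed.
End FieldMorphism.

Section DiagonalCase.
Variables (K : numFieldType) (d : 'rV[K]_4).

Definition spectrum : seq K := [seq d 0 i | i : 'I_4].

Lemma diag_mxX m : diag_mx d ^+ m = diag_mx (\row_j d 0 j ^+ m).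
Proof.
elim: m => [|m IHm]; first by apply/matrixP => i j; rewrite !mxE expr0.
rewrite exprS IHm -mulmxE mulmx_diag; congr diag_mx.
by apply/rowP => j; rewrite !mxE exprS.
Qed.

Lemma tr_diagX m : \tr (diag_mx d ^+ m) = psum m spectrum.
Proof.
by rewrite diag_mxX mxtrace_diag /psum big_image; apply: eq_bigr => j _; rewrite mxE.
Qed.

Lemma size_spectrum : size spectrum = 4.
Proof. by rewrite size_map size_enum_ord. Qed.

Variables (a b : K).
Let c := (a - b) / 2%:R.
Let k := (psum 3 spectrum - c * psum 2 spectrum) / 4%:R.

Lemma Rmat_diag i :
  Rmat (diag_mx d) a b i i = - cubic c (sigma (a * b) spectrum) k (d 0 i).
Proof.
rewrite /Rmat /tf !tr_diagX !diag_mxX !mxE !eqxx !mulr1n /cubic /sigma /k /c.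
by field.
Qed.

Lemma rval_diag : rval (diag_mx d) a b = four_r c (a * b) spectrum / 4%:R.
Proof.
rewrite /rval det_diag !tr_diagX /four_r /c big_image; congr (_ / _).
by field.
Qed.

Lemma rval_diag_ge0 : Rmat (diag_mx d) a b = 0 -> \tr (diag_mx d) = 0 ->
  (forall j, d 0 j \is Num.real) -> a \is Num.real -> b \is Num.real ->
  0 <= rval (diag_mx d) a b.
Proof.
move=> R0 tr0 dR aR bR; rewrite rval_diag divr_ge0 ?ler0n //.
apply: (four_r_ge0 (k := k)) => //.
- exact: size_spectrum.
- by rewrite -tr_diagX expr1.
- by move=> _ /mapP [i _ ->]; apply/eqP; rewrite -oppr_eq0 -Rmat_diag R0 mxE.
- by rewrite /c rpredM ?rpredB // rpredV realn.
- exact: rpredM.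
- by move=> _ /mapP [i _ ->].
Qed.

End DiagonalCase.

(* Diagonalize the complexification of Q by the spectral theorem for
   hermitian matrices and apply the diagonal case. *)
Theorem mainTheorem6 (F : rcfType) (Q : 'M[F]_4) (a b : F) :
  sym_tracefree Q -> Rmat Q a b = 0 -> 0 <= rval Q a b.
Proof.
move=> [Qsym Qtr] R0; pose f := real_complex F; pose QC := map_mx f Q.
have fR x : f x \is Num.real by apply/complex_realP; exists x.
have QC_herm : QC \is hermsymmx.
  apply: realsym_hermsym; last by apply/mxOverP => i j; rewrite mxE.
  by apply/is_hermitianmxP; rewrite expr0 scale1r map_mx_id // /QC map_trmx Qsym.
have /orthomx_spectralP := hermitian_normalmx QC_herm; rewrite -/(sim _ _) => QC_sim.
have P_unit := spectral_unit QC.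
have d_real := hermitian_spectral_diag_real QC_herm.
rewrite -ler0c -(rval_map f) -/QC QC_sim rval_sim //.
apply: rval_diag_ge0 => //; last by move=> j; apply: (mxOverP d_real).
- apply: (sim_inj P_unit); rewrite -Rmat_sim // -QC_sim Rmat_map R0.
  by rewrite map_mx0 /sim mulmx0 mul0mx.
- by rewrite -(sim_tr P_unit) -QC_sim trace_map_mx Qtr rmorph0.
Qed.
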